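(* Let $Z$ be a uniform read-$d$-times NBP and let $P_1,P_2$ be two directed paths of $Z$ having the same initial vertex and the same final vertex. Then a variable labels some edge of $P_1$ if and only if it labels some edge of $P_2$.
   Context: An NBP $Z$ is a directed acyclic multigraph with one source and one sink, some of whose edges are labelled with literals. $Z$ is read-$d$-times if each variable labels at most $d$ edges on each source-sink path, and uniform if each variable (of those labelling edges of $Z$) labels exactly $d$ edges on each source-sink path. *)

From mathcomp Require Import all_boot.
Set Implicit Arguments. Unset Strict Implicit. Unset Printing Implicit Defensive.

(* Edge labels: [lab e = None] means
   unlabelled, [lab e = Some (x, b)] means labelled by the literal x (b = true)
   or ~x (b = false), for a variable x : X. *)

Section NBP.
Variables (V E : finType) (X : eqType).
Variables (src tgt : E -> V) (lab : E -> option (X * bool)).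

Fixpoint walk (u v : V) (es : seq E) : bool :=
  match es with
  | [::] => u == v
  | e :: es' => (src e == u) && walk (tgt e) v es'
  end.

Definition labels_var (x : X) (e : E) : bool :=
  if lab e is Some (y, _) then y == x else false.

Definition occ (x : X) (es : seq E) : nat := count (labels_var x) es.

Definition acyclic : Prop := forall v es, walk v v es -> es = [::].

Definition is_NBP (s t : V) : Prop :=
  [/\ acyclic,
      (forall v, (forall e, tgt e != v) <-> v = s) &
      (forall v, (forall e, src e != v) <-> v = t)].

Definition read_d_times (d : nat) (s t : V) : Prop :=
  forall es, walk s t es -> forall x, occ x es <= d.

Definition uniform (d : nat) (s t : V) : Prop :=
  forall x, (exists e, labels_var x e) ->
  forall es, walk s t es -> occ x es = d.

End NBP.

(** Extend the two paths to source-sink paths [p ++ P1 ++ q] and [p ++ P2 ++ q]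
    with a common prefix [p] from the source and a common suffix [q] to the sink.
    For a variable [x] labelling some edge, uniformity gives both extended paths
    exactly [d] occurrences of [x], so [P1] and [P2] contain equally many. The
    prefix exists because, walking backwards along incoming edges, the set of
    proper ancestors shrinks strictly (by acyclicity) until the source is
    reached; the suffix is the same argument in the reversed graph. *)

From mathcomp Require Import all_boot.
From mathcomp Require Import boolp.

Set Implicit Arguments.
Unset Strict Implicit.
Unset Printing Implicit Defensive.

Section Walks.
Variables (V E : finType) (src tgt : E -> V).

Lemma walk_cat u v w p q :
  walk src tgt u v p -> walk src tgt v w q -> walk src tgt u w (p ++ q).
Proof.
elim: p u => [|e p IH] u /=; first by move/eqP->.
by case/andP=> -> wp wq; rewrite /= IH.
Qed.

Lemma walk_edge e : walk src tgt (src e) (tgt e) [:: e].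
Proof. by rewrite /= !eqxx. Qed.

End Walks.

Lemma walk_rev (V E : finType) (src tgt : E -> V) u v p :
  walk src tgt u v p -> walk tgt src v u (rev p).
Proof.
elim: p u => [|e p IH] u /=; first by rewrite eq_sym.
case/andP=> /eqP <- wp; rewrite rev_cons -cats1.
by apply: walk_cat (IH _ wp) _; rewrite /= !eqxx.
Qed.

Section Reachability.
Variables (V E : finType) (src tgt : E -> V).

Lemma acyclic_rev : acyclic src tgt -> acyclic tgt src.
Proof. by move=> acyc v p /walk_rev/acyc/(congr1 rev); rewrite revK. Qed.

Definition ancestors (a : V) : {set V} :=
  [set b | `[< exists2 p, p != [::] & walk src tgt b a p >]].

Hypothesis acyc : acyclic src tgt.

Lemma ancestors_proper e : ancestors (src e) \proper ancestors (tgt e).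
Proof.
apply/properP; split.
  apply/subsetP => b; rewrite !inE => /asboolP [p _ wp]; apply/asboolP.
  by exists (p ++ [:: e]); [case: p {wp} | exact: walk_cat wp (walk_edge _ _ e)].
exists (src e); rewrite inE.
  by apply/asboolP; exists [:: e]; last exact: walk_edge.
by apply/negP => /asboolP [p + /acyc p_nil]; rewrite p_nil.
Qed.

Lemma walk_from_source s :
  (forall v, (forall e, tgt e != v) -> v = s) -> forall a, exists p, walk src tgt s a p.
Proof.
move=> no_in a; have [n] := ubnP #|ancestors a|; elim: n a => // n IH a.
have [/forallP no_in_a _|] := boolP [forall e, tgt e != a].
  by exists [::]; rewrite /= (no_in a no_in_a).
rewrite negb_forall => /existsP [e /negPn /eqP <-] lt_an.
have [p wp] := IH (src e) (leq_trans (proper_card (ancestors_proper e)) lt_an).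
by exists (p ++ [:: e]); apply: walk_cat wp (walk_edge _ _ e).
Qed.

End Reachability.

Lemma walk_to_sink (V E : finType) (src tgt : E -> V) t :
  acyclic src tgt -> (forall v, (forall e, src e != v) -> v = t) ->
  forall b, exists p, walk src tgt b t p.
Proof.
move=> acyc no_out b; have [p wp] := walk_from_source (acyclic_rev acyc) no_out b.
by exists (rev p); exact: walk_rev wp.
Qed.

Lemma uniform_occ_eq (V E : finType) (X : eqType) (src tgt : E -> V)
    (lab : E -> option (X * bool)) (s t : V) (d : nat) u v P1 P2 x :
  is_NBP src tgt s t -> uniform src tgt lab d s t ->
  walk src tgt u v P1 -> walk src tgt u v P2 -> (exists e, labels_var lab x e) ->
  occ lab x P1 = occ lab x P2.
Proof.
move=> [acyc src_s sink_t] unif w1 w2 lx.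
have [p wp] := walk_from_source acyc (fun a => proj1 (src_s a)) u.
have [q wq] := walk_to_sink acyc (fun b => proj1 (sink_t b)) v.
have occ_extend P : walk src tgt u v P -> occ lab x (p ++ P ++ q) = d.
  by move=> wP; apply: unif lx _ (walk_cat wp (walk_cat wP wq)).
move: (occ_extend _ w1); rewrite -(occ_extend _ w2) /occ !count_cat.
by move/addnI/addIn.
Qed.

Theorem lemma2 (V E : finType) (X : eqType) (src tgt : E -> V)
  (lab : E -> option (X * bool)) (s t : V) (d : nat) :
  is_NBP src tgt s t ->
  read_d_times src tgt lab d s t ->
  uniform src tgt lab d s t ->
  forall (u v : V) (P1 P2 : seq E),
    walk src tgt u v P1 -> walk src tgt u v P2 ->
    forall x : X,
      (exists2 e, e \in P1 & labels_var lab x e) <->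
      (exists2 e, e \in P2 & labels_var lab x e).
Proof.
move=> nbp _ unif u v P1 P2 w1 w2 x.
have labelled_in P R : walk src tgt u v P -> walk src tgt u v R ->
    (exists2 e, e \in P & labels_var lab x e) -> exists2 e, e \in R & labels_var lab x e.
  move=> wP wR [e eP le].
  have eq_occ := uniform_occ_eq nbp unif wP wR (ex_intro _ e le).
  apply/hasP; rewrite has_count -[count _ _]eq_occ -has_count.
  by apply/hasP; exists e.
by split; apply: labelled_in.
Qed.
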